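(* For every real Banach space $X$ with $\dim X\ge 2$ and all $\alpha,\beta>0$, $$DW(X,\alpha,\beta)\ge(\alpha+\beta)\max\{2\rho_X'(0),1\}.$$
   Context: For $\alpha,\beta>0$, $$DW(X,\alpha,\beta)=\sup\left\{\frac{\alpha\|x\|+\beta\|y\|}{\|x-y\|}\left\|\frac{x}{\|x\|}-\frac{y}{\|y\|}\right\|: x,y\in X\setminus\{0\},\ x\neq y\right\}.$$ The Lindenstrauss modulus of smoothness is $\rho_X(t)=\sup\{\tfrac12(\|x+ty\|+\|x-ty\|)-1: x,y\in B_X\}$ for $t\ge0$ ($B_X$ the closed unit ball), and $\rho_X'(0)=\lim_{t\to0^+}\rho_X(t)/t$ is the characteristic of smoothness. *)

From HB Require Import structures.
From mathcomp Require Import all_boot all_order all_algebra.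
From mathcomp Require Import all_classical all_reals all_analysis.
Set Implicit Arguments. Unset Strict Implicit. Unset Printing Implicit Defensive.
Import Order.TTheory GRing.Theory Num.Theory.
Import numFieldNormedType.Exports.
Local Open Scope classical_set_scope.
Local Open Scope ring_scope.

Definition DW (R : realType) (X : normedModType R) (alpha beta : R) : \bar R :=
  ereal_sup [set r : \bar R | exists x y : X,
     [/\ x != 0, y != 0, x != y &
      r = ((alpha * `|x| + beta * `|y|) / `|x - y|
           * `| `|x|^-1 *: x - `|y|^-1 *: y |)%:E]].

Definition rho (R : realType) (X : normedModType R) (t : R) : R :=
  sup [set r : R | exists x y : X,
     [/\ `|x| <= 1, `|y| <= 1 & r = (`|x + t *: y| + `|x - t *: y|) / 2 - 1]].

Definition rho'0 (R : realType) (X : normedModType R) : R :=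
  lim (rho X t / t @[t --> 0^'+]).

Definition dim_ge2 (R : realType) (X : normedModType R) : Prop :=
  exists x y : X, forall a b : R, a *: x + b *: y = 0 -> a = 0 /\ b = 0.

From HB Require Import structures.
From mathcomp Require Import all_boot all_order all_algebra.
From mathcomp Require Import all_classical all_reals all_analysis.
From mathcomp Require Import ring lra.
Import Order.TTheory GRing.Theory Num.Theory.
Import numFieldNormedType.Exports.
Local Open Scope ring_scope.

(* For x, y in the unit ball and small t > 0, feed the pair (x, x + t y) to
   the supremum defining DW.  The distance of the two points is |t y| <= t,
   while the distance of their normalizations is at least
   (|x + t y| + |x - t y| - 2) / |x + t y|, so the DW quotient is about
   (alpha + beta) (|x + t y| + |x - t y| - 2) / t, up to an error O(t).
   Taking the supremum over x, y gives DW >= (alpha + beta) 2 rho(t) / t - O(t),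
   and t -> 0+ gives DW >= 2 (alpha + beta) rho'(0).  The bound
   DW >= alpha + beta comes from the pair (x, -x). *)

Lemma normalized_sub_ge {R : realFieldType} {X : normedModType R} {x w : X} :
  x != 0 -> x + w != 0 -> `|x + w| <= 2 * `|x| ->
  (`|x + w| + `|x - w| - 2 * `|x|) / `|x + w|
    <= `| `|x|^-1 *: x - `|x + w|^-1 *: (x + w) |.
Proof.
rewrite -!normr_gt0 => n0 A0 A2n.
set n := `|x| in n0 A2n *; set A := `|x + w| in A0 A2n *.
have nA0 : 0 < n * A by rewrite mulr_gt0.
have -> : n^-1 *: x - A^-1 *: (x + w)
    = (n * A)^-1 *: (n *: (x - w) - (2 * n - A) *: x).
  have -> : n *: (x - w) - (2 * n - A) *: x = (A - n) *: x - n *: w.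
    by rewrite scalerBr addrAC -scalerBl; congr (_ *: x - _); ring.
  rewrite scalerBr scalerDr opprD addrA -scalerBl !scalerA.
  by congr (_ *: x - _ *: w); field; rewrite ?gt_eqF.
have lower : n * (A + `|x - w| - 2 * n) <= `|n *: (x - w) - (2 * n - A) *: x|.
  apply: le_trans (lerB_dist _ _).
  by rewrite !normrZ gtr0_norm // ger0_norm ?subr_ge0 // -/n; lra.
rewrite normrZ gtr0_norm ?invr_gt0 //; apply: le_trans (ler_wpM2l _ lower).
  by rewrite invfM mulrACA mulVf ?gt_eqF // mul1r mulrC.
by rewrite ltW ?invr_gt0.
Qed.

Lemma quotient_lower_bound (R : realFieldType) (a b s t n A D N : R) :
  0 < a -> 0 < b -> 0 < s <= t -> 0 <= n -> A - t <= n -> 1/2 <= A ->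
  0 < D <= 2 * t -> D / A <= N ->
  (a + b) * (D / t) - 4 * a * t <= (a * n + b * A) / s * N.
Proof.
move=> a0 b0 /andP[s0 st] n0 nA A12 /andP[D0 D2t] DN.
have t0 : 0 < t by lra.
have A0 : 0 < A by lra.
have K0 : 0 < a * n + b * A by nra.
have u0 : 0 <= D / t by rewrite divr_ge0 ?(ltW D0) ?(ltW t0).
have u2 : D / t <= 2 by rewrite ler_pdivrMr.
have nA2 : 1 - 2 * t <= n / A.
  rewrite ler_pdivlMr //.
  have : 0 <= t * (2 * A - 1) by rewrite mulr_ge0 ?(ltW t0) //; lra.
  lra.
have : (a * n + b * A) / t * (D / A) <= (a * n + b * A) / s * N.
  apply: ler_pM; rewrite ?divr_ge0 ?(ltW K0) ?(ltW A0) ?(ltW D0) ?(ltW t0) //.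
  by rewrite ler_pM2l // lef_pV2 // posrE.
apply: le_trans.
rewrite [leRHS](_ : _ = (a * (n / A) + b) * (D / t)); last by field; rewrite ?gt_eqF.
have : 0 <= a * (D / t) * (n / A - (1 - 2 * t)).
  by apply: mulr_ge0; [exact: mulr_ge0 (ltW a0) u0 | rewrite subr_ge0].
have : 0 <= a * t * (2 - D / t).
  by apply: mulr_ge0; [exact: mulr_ge0 (ltW a0) (ltW t0) | rewrite subr_ge0].
lra.
Qed.

Local Open Scope classical_set_scope.

Section DW_lower_bounds.
Variables (R : realType) (X : normedModType R) (a b : R).
Hypotheses (a0 : 0 < a) (b0 : 0 < b).

Lemma DW_ge_quotient {x y : X} : x != 0 -> y != 0 -> x != y ->
  (((a * `|x| + b * `|y|) / `|x - y| * `| `|x|^-1 *: x - `|y|^-1 *: y |)%:E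
     <= DW X a b)%E.
Proof. by move=> x0 y0 xy; apply: ereal_sup_ubound; exists x, y. Qed.

Lemma DW_ge_addr {x : X} : x != 0 -> ((a + b)%:E <= DW X a b)%E.
Proof.
move=> x0; have nx : 0 < `|x| by rewrite normr_gt0.
have xNx : x != - x.
  by rewrite -subr_eq0 opprK -normr_gt0 -mulr2n normrMn -mulr_natr mulr_gt0.
have Nx0 : - x != 0 by rewrite oppr_eq0.
apply: le_trans (DW_ge_quotient x0 Nx0 xNx).
have x2 : 0 < `|x + x| by move: xNx; rewrite -subr_eq0 opprK normr_gt0.
rewrite normrN opprK scalerN opprK -scalerDr normrZ gtr0_norm ?invr_gt0 //.
rewrite lee_fin [leRHS](_ : _ = a + b) //.
by field; rewrite !gt_eqF.
Qed.

Lemma DW_ge_smoothness_quotient (t : R) (x y : X) :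
  0 < t <= 1/4 -> `|x| <= 1 -> `|y| <= 1 ->
  0 < `|x + t *: y| + `|x - t *: y| - 2 ->
  (((a + b) * ((`|x + t *: y| + `|x - t *: y| - 2) / t) - 4 * a * t)%:E
     <= DW X a b)%E.
Proof.
move=> /andP[t0 t14] x1 y1 D0.
set w := t *: y in D0 *.
have wt : `|w| <= t.
  by rewrite normrZ gtr0_norm // -[leRHS]mulr1 ler_wpM2l // ltW.
have w0 : w != 0.
  by apply: contraTneq D0 => ->; rewrite subr0 addr0 -mulr2n -mulr_natr; lra.
have := ler_normD x w; have := ler_normB x w; have := lerB_normD x w.
move=> hAl hB hAu.
have xw0 : x + w != 0 by rewrite -normr_gt0; lra.
have xNxw : x != x + w.
  by rewrite -subr_eq0 opprD addNKr oppr_eq0.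
have x0 : x != 0 by rewrite -normr_gt0; lra.
apply: le_trans (DW_ge_quotient x0 xw0 xNxw).
have -> : x - (x + w) = - w by rewrite opprD addNKr.
rewrite lee_fin normrN.
apply: quotient_lower_bound; rewrite ?normr_gt0 ?w0 //=; try lra.
have A2n : `|x + w| <= 2 * `|x| by lra.
apply: le_trans (normalized_sub_ge x0 xw0 A2n).
by rewrite ler_pM2r ?invr_gt0; lra.
Qed.

Variable z : X.
Hypothesis z_neq0 : z != 0.

Lemma DW_ge_modulus (t : R) : 0 < t <= 1/4 ->
  (((a + b) * (2 * (rho X t / t)) - 4 * a * t)%:E <= DW X a b)%E.
Proof.
move=> t14; have /andP[t0 _] := t14.
have pointwise (x y : X) : `|x| <= 1 -> `|y| <= 1 ->
    (((a + b) * ((`|x + t *: y| + `|x - t *: y| - 2) / t) - 4 * a * t)%:E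
       <= DW X a b)%E.
  move=> x1 y1; have [D0|D0] := ltP 0 (`|x + t *: y| + `|x - t *: y| - 2).
    exact: DW_ge_smoothness_quotient.
  apply: le_trans (DW_ge_addr z_neq0); rewrite lee_fin.
  have : (a + b) * ((`|x + t *: y| + `|x - t *: y| - 2) / t) <= 0.
    by rewrite pmulr_rle0 ?addr_gt0 // pmulr_lle0 ?invr_gt0.
  have : 0 <= a * t by rewrite mulr_ge0 ?(ltW a0) ?(ltW t0).
  have := addr_gt0 a0 b0; lra.
case: (DW X a b) pointwise (DW_ge_addr z_neq0) => [d||//] pointwise _;
  last by rewrite leey.
rewrite lee_fin.
suff : rho X t / t <= (d + 4 * a * t) / (2 * (a + b)).
  rewrite ler_pdivlMr ?mulr_gt0 ?addr_gt0 //; lra.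
rewrite ler_pdivrMr //; apply: ge_sup.
  exists (-1), 0, 0; split; rewrite ?normr0 //.
  by rewrite scaler0 addr0 subr0 normr0 addr0 mul0r sub0r.
move=> _ [x [y [x1 y1 ->]]].
have := pointwise x y x1 y1; rewrite lee_fin.
set S := `|x + t *: y| + `|x - t *: y| => h.
have ab0 : 0 < 2 * (a + b) by rewrite mulr_gt0 ?addr_gt0.
rewrite [leLHS](_ : _ = (a + b) * ((S - 2) / t) / (2 * (a + b)) * t); last first.
  by field; rewrite !gt_eqF ?addr_gt0.
by rewrite ler_pM2r // ler_pM2r ?invr_gt0 //; lra.
Qed.

Lemma DW_ge_rho'0 : (((a + b) * (2 * rho'0 X))%:E <= DW X a b)%E.
Proof.
have [cv|dv] := pselect (cvg (rho X t / t @[t --> 0^'+])); last first.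
  (* [lim] of a divergent filter is the junk value [point] = 0. *)
  rewrite /rho'0 dvgP // mulr0 mulr0; apply: le_trans (DW_ge_addr z_neq0).
  by rewrite lee_fin addr_ge0 // ltW.
have rho'0E : rho X t / t @[t --> 0^'+] --> rho'0 X := cv.
move: DW_ge_modulus (DW_ge_addr z_neq0).
case: (DW X a b) => [d||//] bound _; last by rewrite leey.
have f_cvg : (a + b) * (2 * (rho X t / t)) - 4 * a * t @[t --> 0^'+]
    --> (a + b) * (2 * rho'0 X) - 4 * a * 0.
  apply: cvgB; apply: cvgM; try exact: cvg_cst.
    by apply: cvgM => //; exact: cvg_cst.
  by apply: cvg_at_right_filter; exact: cvg_id.
rewrite lee_fin -[leLHS]subr0 -(mulr0 (4 * a)) -(cvg_lim _ f_cvg) //.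
apply: limr_le; first by apply/cvg_ex; exists ((a + b) * (2 * rho'0 X) - 4 * a * 0).
near=> t; rewrite -lee_fin; apply: bound; apply/andP; split; near: t.
- exact: nbhs_right_gt.
- by apply: nbhs_right_le; lra.
Unshelve. all: end_near.
Qed.

End DW_lower_bounds.

Theorem theorem4 (R : realType) (X : completeNormedModType R)
  (alpha beta : R) :
  dim_ge2 X -> 0 < alpha -> 0 < beta ->
  (((alpha + beta) * Num.max (2 * rho'0 X) 1)%:E <= DW X alpha beta)%E.
Proof.
move=> [u [v indep]] a0 b0.
have u0 : u != 0.
  apply/eqP => u0; have [] := indep 1 0; first by rewrite u0 scaler0 scale0r addr0.
  by move/eqP; rewrite oner_eq0.
have [_|_] := leP (2 * rho'0 X) 1; rewrite ?mulr1.
- exact: DW_ge_addr u0.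
- exact: DW_ge_rho'0 u0.
Qed.
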